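(* Let $\alpha>0$. Suppose $f_1,\dots,f_n:\mathbb{R}^d\to\mathbb{R}$ are convex and $L$-smooth, $r:\mathbb{R}^d\to\mathbb{R}\cup\{\infty\}$ is proper, closed and convex, and $A,B\in\mathbb{R}^{n\times n}$ satisfy the matrix assumptions below. If a point $(\bm{x}^\star,\bm{w}^\star,\bm{u}^\star)\in(\mathbb{R}^{nd})^3$ satisfies $$\bm{w}^\star=\bm{x}^\star-\alpha\nabla F(\bm{x}^\star),\qquad \bm{x}^\star=\mathrm{prox}_{\alpha R}\big(\bm{A}(\bm{w}^\star-\sqrt{\bm{B}}\bm{u}^\star)\big),\qquad \bm{0}=\sqrt{\bm{B}}\big(\bm{w}^\star-\sqrt{\bm{B}}\bm{u}^\star\big),$$ then $\bm{x}^\star=\bm{1}_n\otimes x^\star$ for some $x^\star\in\mathbb{R}^d$, and $x^\star$ solves $\min_{x\in\mathbb{R}^d}\frac1n\sum_{i=1}^n\big[f_i(x)+r(x)\big]$.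
   Context: Notation: for $\bm{x}=\mathrm{col}\{x_1,\dots,x_n\}\in\mathbb{R}^{nd}$ with $x_i\in\mathbb{R}^d$, $F(\bm{x})=\sum_{i=1}^n f_i(x_i)$ and $R(\bm{x})=\sum_{i=1}^n r(x_i)$. For $\alpha>0$, $\mathrm{prox}_{\alpha r}(x)=\arg\min_{s}\{r(s)+\frac{1}{2\alpha}\|s-x\|^2\}$, and $\mathrm{prox}_{\alpha R}$ acts blockwise. $W\in\mathbb{R}^{n\times n}$ is a mixing matrix of an undirected connected graph on $n$ nodes: $W=W^{\sf T}$, $W_{ij}>0$ if $(i,j)$ is an edge, $W_{ij}=0$ if $i\neq j$ and $(i,j)$ is not an edge, and $W\bm{1}=\bm{1}$. Matrices $A,B$ are polynomials in $W$ satisfying: $A^{\sf T}=A$, $A\bm{1}=\bm{1}$, $B\succeq 0$, $\mathrm{null}(B)=\mathrm{span}(\bm{1})$, and $I-A^2-B\succeq 0$. Set $\bm{A}=A\otimes I_d$, $\bm{B}=B\otimes I_d$, and $\sqrt{\bm{B}}=\sqrt{B}\otimes I_d$ where $\sqrt B$ is the positive semidefinite square root of $B$. *)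

From HB Require Import structures.
From mathcomp Require Import all_boot all_order all_algebra.
From mathcomp Require Import all_classical all_reals all_analysis.
Set Implicit Arguments. Unset Strict Implicit. Unset Printing Implicit Defensive.
Import Order.TTheory GRing.Theory Num.Theory.
Import numFieldNormedType.Exports.
Local Open Scope ring_scope.

(* Vectors of R^{nd} = col{x_1,...,x_n} are represented as n x d matrices
   whose i-th row is x_i.  Then (A (x) I_d) x corresponds to A *m X. *)

Section Defs.
Variable R : realType.

Definition dotv (d : nat) (u v : 'rV[R]_d) : R := \sum_(j < d) u 0 j * v 0 j.
Definition sqnorm (d : nat) (u : 'rV[R]_d) : R := dotv u u.
Definition enorm (d : nat) (u : 'rV[R]_d) : R := Num.sqrt (sqnorm u).

Definition convex_fun (d : nat) (f : 'rV[R]_d -> R) :=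
  forall (x y : 'rV[R]_d) (t : R), 0 <= t <= 1 ->
    f (t *: x + (1 - t) *: y) <= t * f x + (1 - t) * f y.

Definition is_gradient (d : nat) (f : 'rV[R]_d -> R) (g : 'rV[R]_d -> 'rV[R]_d) :=
  forall x : 'rV[R]_d, differentiable f x /\ forall h, 'd f x h = dotv (g x) h.

Definition L_smooth (d : nat) (L : R) (f : 'rV[R]_d -> R) (g : 'rV[R]_d -> 'rV[R]_d) :=
  is_gradient f g /\ forall x y, enorm (g x - g y) <= L * enorm (x - y).

Definition ext_valued (d : nat) (r : 'rV[R]_d -> \bar R) := forall x, r x != -oo%E.
Definition proper_fun (d : nat) (r : 'rV[R]_d -> \bar R) := exists x, (r x < +oo)%E.
Definition closed_fun (d : nat) (r : 'rV[R]_d -> \bar R) :=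
  closed [set p : 'rV[R]_d * R | (r p.1 <= p.2%:E)%E].
Definition convex_efun (d : nat) (r : 'rV[R]_d -> \bar R) :=
  forall (x y : 'rV[R]_d) (t : R), 0 < t < 1 ->
    (r (t *: x + (1 - t) *: y)%R <= t%:E * r x + (1 - t)%R%:E * r y)%E.

Definition is_prox (d : nat) (alpha : R) (r : 'rV[R]_d -> \bar R) (x p : 'rV[R]_d) :=
  forall s : 'rV[R]_d,
    (r p + ((2 * alpha)^-1 * sqnorm (p - x)%R)%:E <=
     r s + ((2 * alpha)^-1 * sqnorm (s - x)%R)%:E)%E.

Definition mxpoly_eval (n : nat) (p : {poly R}) (W : 'M[R]_n) : 'M[R]_n :=
  \sum_(i < size p) p`_i *: W ^+ i.
Definition is_poly_in (n : nat) (M W : 'M[R]_n) := exists p : {poly R}, M = mxpoly_eval p W.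
Definition psd (n : nat) (M : 'M[R]_n) :=
  M^T = M /\ forall v : 'cV[R]_n, 0 <= (v^T *m M *m v) 0 0.
Definition ones (n : nat) : 'cV[R]_n := const_mx 1.

Definition undirected_connected (n : nat) (e : rel 'I_n) :=
  symmetric e /\ irreflexive e /\ forall i j : 'I_n, connect e i j.

Definition mixing_matrix (n : nat) (e : rel 'I_n) (W : 'M[R]_n) :=
  W^T = W /\
  (forall i j, e i j -> 0 < W i j) /\
  (forall i j, i != j -> ~~ e i j -> W i j = 0) /\
  W *m ones n = ones n.

Definition AB_assumptions (n : nat) (W A B : 'M[R]_n) :=
  is_poly_in A W /\ is_poly_in B W /\
  A^T = A /\ A *m ones n = ones n /\
  psd B /\
  (forall v : 'cV[R]_n, B *m v = 0 <-> exists c : R, v = c *: ones n) /\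
  psd (1%:M - A *m A - B).

Definition is_psd_sqrt (n : nat) (S B : 'M[R]_n) := psd S /\ S *m S = B.

End Defs.

From HB Require Import structures.
From mathcomp Require Import all_boot all_order all_algebra.
From mathcomp Require Import all_classical all_reals all_analysis.
From mathcomp Require Import ring lra.
Set Implicit Arguments. Unset Strict Implicit. Unset Printing Implicit Defensive.
Import Order.TTheory GRing.Theory Num.Theory.
Import numFieldNormedType.Exports.
Local Open Scope ring_scope.
Local Open Scope classical_set_scope.

(* Write v := w* - sqrt(B) u*.  Since B = sqrt(B)^2 and sqrt(B) v = 0, B v = 0, so v
   is a consensus matrix (all rows equal); A fixes consensus matrices, hence every
   node applies prox_{alpha r} to the same point and, the prox being unique, x* is a
   consensus 1 (x) x*.  The prox optimality condition at node i reads
   alpha (r x* - r y) <= <alpha grad f_i x* + c_i, y - x*> with c_i the i-th row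
   of sqrt(B) u*; these rows sum to 1^T sqrt(B) u* = 0 because sqrt(B) 1 = 0, so
   summing over i and using the gradient inequality of the convex f_i proves that
   x* minimises sum_i (f_i + r). *)

Section InnerProduct.
Variables (R : realType) (d : nat).
Implicit Types u v w : 'rV[R]_d.

Lemma dotvDl u v w : dotv (u + v) w = dotv u w + dotv v w.
Proof. by rewrite /dotv -big_split; apply: eq_bigr => j _; rewrite mxE mulrDl. Qed.

Lemma dotvZl (a : R) u w : dotv (a *: u) w = a * dotv u w.
Proof. by rewrite /dotv mulr_sumr; apply: eq_bigr => j _; rewrite mxE mulrA. Qed.

Lemma dotvC u w : dotv u w = dotv w u.
Proof. by apply: eq_bigr => j _; rewrite mulrC. Qed.

Lemma dotvDr u v w : dotv w (u + v) = dotv w u + dotv w v.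
Proof. by rewrite dotvC dotvDl !(dotvC w). Qed.

Lemma dotvZr (a : R) u w : dotv w (a *: u) = a * dotv w u.
Proof. by rewrite dotvC dotvZl dotvC. Qed.

Lemma dotv0l w : dotv 0 w = 0.
Proof. by rewrite /dotv big1 // => j _; rewrite mxE mul0r. Qed.

Lemma dotv_suml (I : finType) (F : I -> 'rV[R]_d) w :
  dotv (\sum_i F i) w = \sum_i dotv (F i) w.
Proof.
rewrite /dotv exchange_big /=; apply: eq_bigr => j _.
by rewrite summxE mulr_suml.
Qed.

Lemma sqnorm_ge0 u : 0 <= sqnorm u.
Proof. by apply: sumr_ge0 => j _; rewrite -expr2 sqr_ge0. Qed.

Lemma sqnorm_eq0 u : sqnorm u = 0 -> u = 0.
Proof.
move=> u0; apply/rowP => j; rewrite mxE.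
have sq0 : \sum_(k < d) u 0 k ^+ 2 = 0.
  by rewrite -[RHS]u0; apply: eq_bigr => k _; rewrite expr2.
have /(_ j isT) /eqP := psumr_eq0P (fun k _ => sqr_ge0 (u 0 k)) sq0.
by rewrite sqrf_eq0 => /eqP.
Qed.

Lemma sqnormD u v : sqnorm (u + v) = sqnorm u + 2 * dotv u v + sqnorm v.
Proof. by rewrite /sqnorm dotvDl !dotvDr (dotvC v u); ring. Qed.

Lemma sqnormZ (a : R) u : sqnorm (a *: u) = a ^+ 2 * sqnorm u.
Proof. by rewrite /sqnorm dotvZl dotvZr mulrA expr2. Qed.

End InnerProduct.

Lemma le_of_le_quadratic_perturbation (R : realFieldType) (X D S : R) : 0 <= S ->
  (forall t, 0 < t < 1 -> t * X <= t * D + t ^+ 2 * S) -> X <= D.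
Proof.
move=> S0 HX; apply/ler_addgt0Pr => e e0.
have eS : 0 < e + S + 1 by lra.
pose t := e / (e + S + 1).
have t0 : 0 < t by rewrite divr_gt0.
have t1 : t < 1 by rewrite ltr_pdivrMr // mul1r; lra.
have te : t * (e + S + 1) = e by rewrite /t mulfVK // gt_eqF.
rewrite -(ler_pM2l t0); apply: (le_trans (HX t _)); first by rewrite t0 t1.
rewrite mulrDr lerD2l expr2 -mulrA ler_pM2l // -te ler_pM2l //; lra.
Qed.

Section Prox.
Variables (R : realType) (d : nat) (alpha : R) (r : 'rV[R]_d -> \bar R).
Hypotheses (alpha_gt0 : 0 < alpha) (r_ext : ext_valued r) (r_proper : proper_fun r)
  (r_convex : convex_efun r).

Lemma prox_finite z p : is_prox alpha r z p -> exists rp : R, r p = rp%:E.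
Proof.
case: r_proper => s0 s0_fin /(_ s0).
move: (r_ext p); case: (r p) => [rp _ _|_|//]; first by exists rp.
by move: (r_ext s0) s0_fin; case: (r s0).
Qed.

(* Compare p with the points p + t (s - p) of the segment towards s and let t -> 0. *)
Lemma prox_optimality z p rp s rs : is_prox alpha r z p ->
  r p = rp%:E -> r s = rs%:E -> alpha * (rp - rs) <= dotv (p - z) (s - p).
Proof.
move=> prox_p Erp Ers; set a := p - z; set b := s - p.
apply: (@le_of_le_quadratic_perturbation _ _ _ (sqnorm b / 2)).
  by rewrite divr_ge0 ?sqnorm_ge0.
move=> t /andP[t0 t1].
have seg : t *: s + (1 - t) *: p - z = a + t *: b.
  by apply/rowP => j; rewrite /a /b !mxE; ring.
have := @r_convex s p t; rewrite t0 t1 Ers Erp -!EFinM -EFinD => /(_ isT) conv.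
have := prox_p (t *: s + (1 - t) *: p); rewrite Erp seg -EFinD => min_p.
have : ((rp + (2 * alpha)^-1 * sqnorm a)%:E <=
       (t * rs + (1 - t) * rp + (2 * alpha)^-1 * sqnorm (a + t *: b))%:E)%E.
  by apply: le_trans min_p _; rewrite [X in (_ <= X)%E]EFinD leeD2r.
rewrite lee_fin sqnormD sqnormZ dotvZr.
set c := (2 * alpha)^-1; set A := sqnorm a; set S := sqnorm b; set D := dotv a b.
move=> ineq.
have ac : alpha * c = 2^-1 by rewrite /c invfM mulrCA divff ?mulr1 // gt_eqF.
have : t * (rp - rs) <= c * (2 * (t * D) + t ^+ 2 * S) by move: ineq; rewrite !mulrDr; lra.
move=> /(ler_wpM2l (ltW alpha_gt0)); rewrite [X in _ <= X]mulrA ac; lra.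
Qed.

Lemma prox_unique z p1 p2 : is_prox alpha r z p1 -> is_prox alpha r z p2 -> p1 = p2.
Proof.
move=> prox1 prox2.
have [r1 E1] := prox_finite prox1; have [r2 E2] := prox_finite prox2.
have opt1 := prox_optimality prox1 E1 E2; have opt2 := prox_optimality prox2 E2 E1.
have sum_opt : dotv (p1 - z) (p2 - p1) + dotv (p2 - z) (p1 - p2) = - sqnorm (p1 - p2).
  rewrite /sqnorm /dotv -big_split -sumrN.
  by apply: eq_bigr => j _; rewrite !mxE /=; ring.
have : sqnorm (p1 - p2) = 0 by apply/le_anti; rewrite sqnorm_ge0 andbT; lra.
by move=> /sqnorm_eq0 /eqP; rewrite subr_eq0 => /eqP.
Qed.

End Prox.

Lemma convex_gradient_ineq (R : realType) (d : nat) (f : 'rV[R]_d -> R) g x y :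
  convex_fun f -> is_gradient f g -> f x + dotv (g x) (y - x) <= f y.
Proof.
move=> f_convex /(_ x) [dfx dfE]; set h := y - x.
rewrite -dfE -(deriveE h dfx) -lerBrDl /derive.
set F := (fun t : R => _).
have F_cvg := @diff_derivable _ _ _ f x h dfx.
have F_cvg_right : cvg (F @ 0^'+).
  apply/cvg_ex; exists (lim (F @ 0^')).
  move=> U /F_cvg /nbhs_ballP [_ /posnumP[e] ballU].
  by exists e%:num => //= t t_near /gt_eqF/negbT/ballU; exact.
rewrite cvg_at_rightE //; apply: limr_le => //.
near=> t.
have t0 : 0 < t by near: t; exact: nbhs_right_gt.
have t1 : t < 1 by near: t; apply: nbhs_right_lt; exact: ltr01.
have := f_convex y x t; rewrite (ltW t0) (ltW t1) => /(_ isT).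
have -> : t *: y + (1 - t) *: x = t *: h + x.
  by rewrite /h scalerBr scalerBl scale1r addrA addrAC.
rewrite mulrBl mul1r => conv.
by rewrite /F /= ler_pdivrMl //; lra.
Unshelve. all: by end_near.
Qed.

Section ConsensusMatrices.
Variables (R : realType) (n : nat).

Lemma sum_row_mx m (M : 'M[R]_(n, m)) : \sum_i row i M = (ones R n)^T *m M.
Proof.
apply/rowP => j; rewrite summxE !mxE.
by apply: eq_bigr => i _; rewrite !mxE mul1r.
Qed.

Lemma cV_trmx_mul_self_eq0 (u : 'cV[R]_n) : u^T *m u = 0 -> u = 0.
Proof.
move=> /(congr1 (fun M : 'M[R]_1 => M 0 0)); rewrite !mxE => uu.
have sq0 : \sum_k u k 0 ^+ 2 = 0.
  by rewrite -[RHS]uu; apply: eq_bigr => k _; rewrite !mxE expr2.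
apply/colP => k; rewrite mxE.
have /(_ k isT) /eqP := psumr_eq0P (fun k _ => sqr_ge0 (u k 0)) sq0.
by rewrite sqrf_eq0 => /eqP.
Qed.

Lemma sym_sqrt_mul_ones (S B : 'M[R]_n) :
  S^T = S -> S *m S = B -> B *m ones R n = 0 -> S *m ones R n = 0.
Proof.
move=> S_sym SS B1; apply: cV_trmx_mul_self_eq0.
by rewrite trmx_mul S_sym -mulmxA (mulmxA S) SS B1 mulmx0.
Qed.

Lemma sum_row_sym_mul_eq0 m (S : 'M[R]_n) (M : 'M[R]_(n, m)) :
  S^T = S -> S *m ones R n = 0 -> \sum_i row i (S *m M) = 0.
Proof.
move=> S_sym S1; rewrite sum_row_mx mulmxA -{1}S_sym -trmx_mul S1.
by rewrite trmx0 mul0mx.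
Qed.

Definition consensus m (M : 'M[R]_(n, m)) := forall i k, row i M = row k M.

Lemma consensus_of_ker (B : 'M[R]_n) m (V : 'M[R]_(n, m)) :
  (forall u : 'cV[R]_n, B *m u = 0 -> exists c : R, u = c *: ones R n) ->
  B *m V = 0 -> consensus V.
Proof.
move=> Bker BV i k; apply/rowP => j; rewrite !mxE.
have [c c1] : exists c : R, col j V = c *: ones R n.
  by apply: Bker; rewrite colE mulmxA -colE BV; apply/colP => l; rewrite !mxE.
by have := congr1 (fun u : 'cV[R]_n => u i 0 = u k 0) c1; rewrite !mxE => ->.
Qed.

Lemma row_stochastic_mul_consensus (A : 'M[R]_n) m (V : 'M[R]_(n, m)) i :
  A *m ones R n = ones R n -> consensus V -> row i (A *m V) = row i V.
Proof.
move=> A1 V_cons; rewrite row_mul mulmx_sum_row.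
under eq_bigr => k _ do rewrite (V_cons k i).
rewrite -scaler_suml.
suff -> : \sum_k row i A 0 k = 1 by rewrite scale1r.
have := congr1 (fun u : 'cV[R]_n => u i 0) A1; rewrite !mxE => <-.
by apply: eq_bigr => k _; rewrite !mxE mulr1.
Qed.

End ConsensusMatrices.

Lemma sum_le_of_first_order_conditions (R : realType) (n d : nat) (alpha rx ry : R)
    (f : 'I_n -> 'rV[R]_d -> R) (g c : 'I_n -> 'rV[R]_d) (x y : 'rV[R]_d) :
  0 < alpha -> (forall i, f i x + dotv (g i) (y - x) <= f i y) -> \sum_i c i = 0 ->
  (forall i, alpha * (rx - ry) <= dotv (alpha *: g i + c i) (y - x)) ->
  \sum_i (f i x + rx) <= \sum_i (f i y + ry).
Proof.
move=> alpha_gt0 grad_ineq c_sum opt.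
suff : \sum_(i < n) (rx - ry) <= \sum_(i < n) (f i y - f i x).
  move=> le_sums; rewrite -subr_ge0 -sumrB.
  rewrite (eq_bigr (fun i => (f i y - f i x) - (rx - ry))) => [|i _]; last by ring.
  by rewrite sumrB subr_ge0.
rewrite -(ler_pM2l alpha_gt0) !mulr_sumr; apply: (le_trans (ler_sum _ (fun i _ => opt i))).
under eq_bigr => i _ do rewrite dotvDl dotvZl.
rewrite big_split /= -dotv_suml c_sum dotv0l addr0.
by apply: ler_sum => i _; rewrite ler_pM2l //; have := grad_ineq i; lra.
Qed.

Lemma mean_le_of_sum_le (R : realType) (n : nat) (a b : 'I_n -> R) (rx : R) (ry : \bar R) :
  (0 < n)%N -> ry != -oo%E ->
  (forall q : R, ry = q%:E -> \sum_i (a i + rx) <= \sum_i (b i + q)) ->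
  ((n%:R^-1)%:E * \sum_i ((a i)%:E + rx%:E) <= (n%:R^-1)%:E * \sum_i ((b i)%:E + ry))%E.
Proof.
move=> n_gt0; case: ry => [q _ /(_ q erefl) sum_le| _ _ |//].
  rewrite -!(eq_bigr _ (fun i _ => EFinD _ _)) !sumEFin -!EFinM lee_fin.
  by rewrite ler_wpM2l ?invr_ge0 ?ler0n.
under [X in (_ <= _ * X)%E]eq_bigr do rewrite addey //.
rewrite [X in (_ <= _ * X)%E](bigD1 (Ordinal n_gt0)) //= addye.
  by rewrite gt0_muley ?leey // lte_fin invr_gt0 ltr0n.
rewrite gt_eqF // (lt_le_trans ltNy0) // sume_ge0 // => i _; exact: leey.
Qed.

Theorem lemma1 (R : realType) (n d : nat) (alpha L : R)
  (f : 'I_n -> 'rV[R]_d -> R) (gradf : 'I_n -> 'rV[R]_d -> 'rV[R]_d)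
  (r : 'rV[R]_d -> \bar R)
  (e : rel 'I_n) (W A B sqrtB : 'M[R]_n)
  (xs ws us : 'M[R]_(n, d)) :
  0 < alpha ->
  (forall i, convex_fun (f i)) ->
  (forall i, L_smooth L (f i) (gradf i)) ->
  ext_valued r -> proper_fun r -> closed_fun r -> convex_efun r ->
  undirected_connected e -> mixing_matrix e W ->
  AB_assumptions W A B -> is_psd_sqrt sqrtB B ->
  ws = xs - alpha *: (\matrix_(i < n) gradf i (row i xs)) ->
  (forall i : 'I_n, is_prox alpha r (row i (A *m (ws - sqrtB *m us))) (row i xs)) ->
  sqrtB *m (ws - sqrtB *m us) = 0 ->
  exists x : 'rV[R]_d,
    (forall i : 'I_n, row i xs = x) /\
    (forall y : 'rV[R]_d,
       ((n%:R^-1)%:E * \sum_(i < n) ((f i x)%:E + r x) <=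
        (n%:R^-1)%:E * \sum_(i < n) ((f i y)%:E + r y))%E).
Proof.
move=> alpha_gt0 f_convex f_smooth r_ext r_proper _ r_convex _ _
  [_ [_ [_ [A1 [_ [Bker _]]]]]] [[sqrtB_sym _] sqrtB_sq] Ews prox sqrtBv.
set v := ws - sqrtB *m us in prox sqrtBv.
have v_cons : consensus v.
  by apply: consensus_of_ker (fun u => (Bker u).1) _; rewrite -sqrtB_sq -mulmxA sqrtBv mulmx0.
have Av i : row i (A *m v) = row i v by exact: row_stochastic_mul_consensus.
have [n0|n_gt0] := posnP n; first by subst n; exists 0; split => [[]|y]; rewrite ?big_ord0.
pose i0 := Ordinal n_gt0; pose x := row i0 xs.
have xs_cons i : row i xs = x.
  apply: (prox_unique alpha_gt0 r_ext r_proper r_convex (prox i)).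
  by rewrite Av (v_cons i i0) -(Av i0); exact: prox i0.
exists x; split => // y.
have [rx Erx] := prox_finite r_ext r_proper (prox i0); rewrite xs_cons in Erx.
rewrite Erx; apply: mean_le_of_sum_le (r_ext y) _ => // ry Ery.
have sqrtB1 : sqrtB *m ones R n = 0.
  by apply: sym_sqrt_mul_ones sqrtB_sym sqrtB_sq _; apply/(Bker _).2; exists 1; rewrite scale1r.
apply: (sum_le_of_first_order_conditions (c := fun i => row i (sqrtB *m us)) alpha_gt0).
- by move=> i; apply: convex_gradient_ineq (f_convex i) (f_smooth i).1.
- exact: sum_row_sym_mul_eq0.
- move=> i; have := prox_optimality alpha_gt0 r_convex (prox i).
  suff <- : x - row i v = alpha *: gradf i x + row i (sqrtB *m us).
    by rewrite xs_cons Av; exact.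
  by rewrite /v Ews -(xs_cons i); apply/rowP => j; rewrite !mxE /=; ring.
Qed.
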